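(* (Generalized Artin's Lemma.) Let $G$ be a profinite group acting faithfully by automorphisms on a field $h$, such that for every $x\in h$ the stabilizer $S(x)=\{\sigma\in G:\sigma(x)=x\}$ is an open subgroup of $G$. Let $k=h^G$ be the subfield of $h$ of elements fixed by all of $G$. If $h/k$ is an outer extension, then $h/k$ is algebraic and Galois, and the action identifies $G$ with $\mathrm{Gal}(h/k)$ (i.e. $\mathrm{Gal}(h/k)=G$).
   Context: ''Field'' means a not necessarily commutative division ring. For a field extension $h/k$ and $x\in h$, $x$ is algebraic over $k$ if the subfield $k(x)$ generated by $k$ and $x$ is finite-dimensional both as a left and a right $k$-vector space; $h/k$ is algebraic if all elements of $h$ are algebraic over $k$. $h/k$ is outer if the only inner automorphism of $h$ fixing $k$ pointwise is the identity. $\mathrm{Gal}(h/k)$ is the group of automorphisms of $h$ fixing $k$ pointwise, and $h/k$ is Galois if the subfield of $h$ fixed by $\mathrm{Gal}(h/k)$ is $k$. *)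

From HB Require Import structures.
From mathcomp Require Import all_boot all_order all_algebra.
From mathcomp Require Import all_classical topology.
Set Implicit Arguments. Unset Strict Implicit. Unset Printing Implicit Defensive.
Import Order.TTheory GRing.Theory.
Local Open Scope classical_set_scope.
Local Open Scope ring_scope.

(** "Field" = (not necessarily commutative) division ring: a unit ring
    (nontrivial, 1 != 0) in which every nonzero element is invertible. *)
Definition is_division_ring (h : unitRingType) : Prop :=
  forall x : h, x != 0 -> x \is a GRing.unit.

Definition is_subfield (h : unitRingType) (S : set h) : Prop :=
  [/\ S 0, S 1,
      (forall a b, S a -> S b -> S (a - b)),
      (forall a b, S a -> S b -> S (a * b)) &
      (forall a, S a -> a != 0 -> S a^-1)].

Definition gen_subfield (h : unitRingType) (k : set h) (x : h) : set h :=
  [set y | forall S : set h, is_subfield S -> k `<=` S -> S x -> S y].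

Definition left_findim (h : unitRingType) (k V : set h) : Prop :=
  exists s : seq h, (forall v, v \in s -> V v) /\
    forall y, V y -> exists c : 'I_(size s) -> h,
      (forall i, k (c i)) /\ y = \sum_(i < size s) c i * s`_i.

Definition right_findim (h : unitRingType) (k V : set h) : Prop :=
  exists s : seq h, (forall v, v \in s -> V v) /\
    forall y, V y -> exists c : 'I_(size s) -> h,
      (forall i, k (c i)) /\ y = \sum_(i < size s) s`_i * c i.

Definition algebraic_over (h : unitRingType) (k : set h) (x : h) : Prop :=
  left_findim k (gen_subfield k x) /\ right_findim k (gen_subfield k x).

Definition algebraic_ext (h : unitRingType) (k : set h) : Prop :=
  forall x : h, algebraic_over k x.

Definition is_ring_aut (h : unitRingType) (s : h -> h) : Prop :=
  [/\ (forall a b, s (a + b) = s a + s b),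
      (forall a b, s (a * b) = s a * s b),
      s 1 = 1 & bijective s].

Definition in_Gal (h : unitRingType) (k : set h) (s : h -> h) : Prop :=
  is_ring_aut s /\ (forall a, k a -> s a = a).

Definition outer_ext (h : unitRingType) (k : set h) : Prop :=
  forall u : h, u \is a GRing.unit ->
    (forall a, k a -> u * a * u^-1 = a) -> forall y, u * y * u^-1 = y.

Definition galois_ext (h : unitRingType) (k : set h) : Prop :=
  [set y | forall s, in_Gal k s -> s y = y] = k.

Definition is_profinite_group (G : topologicalType)
  (mul : G -> G -> G) (inv : G -> G) (e : G) : Prop :=
  [/\ (forall a b c, mul a (mul b c) = mul (mul a b) c),
      (forall a, mul e a = a /\ mul a e = a) &
      (forall a, mul (inv a) a = e /\ mul a (inv a) = e)] /\
  [/\ continuous (fun p : G * G => mul p.1 p.2),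
      continuous inv,
      compact [set: G], hausdorff_space G & totally_disconnected [set: G]].

Definition faithful_aut_action (G : Type) (mul : G -> G -> G) (e : G)
  (h : unitRingType) (act : G -> h -> h) : Prop :=
  [/\ (forall g, is_ring_aut (act g)),
      (forall x, act e x = x),
      (forall g g' x, act (mul g g') x = act g (act g' x)) &
      (forall g, (forall x, act g x = x) -> g = e)].

Definition stabilizer (G : Type) (h : Type) (act : G -> h -> h) (x : h) : set G :=
  [set g | act g x = x].

Definition fixed_set (G : Type) (h : Type) (act : G -> h -> h) : set h :=
  [set x | forall g, act g x = x].

From mathcomp Require Import all_boot all_order all_algebra all_classical topology finmap.
Set Implicit Arguments. Unset Strict Implicit. Unset Printing Implicit Defensive.
Import GRing.Theory.
Local Open Scope classical_set_scope.
Local Open Scope ring_scope.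

(* For a finite set X of elements of h, let L_X be the subfield of elements whose
   image under g is determined by the images of X.  Compactness of G and openness
   of stabilizers leave only finitely many restrictions act (T i) of G to L_X,
   and outerness says that no two of them differ by an inner automorphism.  A
   Dedekind-Artin elimination then produces, for each m, pairs (p.1, p.2) with
   p.2 in L_X and sum_p p.1 * act (T i) p.2 = [i == m].  The trace
   Tr z = sum_i act (T i) z is G-invariant, so y = sum_p Tr (y p.2) p.1 shows
   that L_X, and hence k(x), is finite-dimensional over k = h^G on each side.
   The same expansion writes any s in Gal(h/k) as y |-> sum_i act (T i) y * c i,
   and a nonzero c i twists s into act (T i) on L_X; a second compactness
   argument glues these agreements into s = act g. *)

Section LeftSpan.
Variables (R : unitRingType) (k : set R).

Fixpoint lspan (ws : seq R) (y : R) : Prop :=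
  if ws is w :: ws' then exists2 c, k c & lspan ws' (y - c * w) else y = 0.

Definition is_lsubspace (V : set R) : Prop :=
  [/\ V 0, (forall a b, V a -> V b -> V (a - b)) &
      (forall c a, k c -> V a -> V (c * a))].

Hypothesis ks : is_subfield k.

Lemma lspan_lsubspace ws : is_lsubspace (lspan ws).
Proof.
have [k0 _ kB kM _] := ks.
elim: ws => [|w ws [V0 VB VM]] /=; first by split=> [//|a b -> ->|c a _ ->];
  rewrite ?subr0 ?mulr0.
split; first by exists 0; rewrite ?mul0r ?subr0.
  move=> a b [ca kca Ha] [cb kcb Hb]; exists (ca - cb); first exact: kB.
  have -> : a - b - (ca - cb) * w = (a - ca * w) - (b - cb * w).
    by rewrite mulrBl !opprD !opprK addrACA.
  exact: VB.
move=> c a kc [ca kca Ha]; exists (c * ca); first exact: kM.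
by rewrite -mulrA -mulrBr; exact: VM.
Qed.

Lemma lspan_sum (I : eqType) (r : seq I) (c w : I -> R) :
  (forall i, i \in r -> k (c i)) -> lspan (map w r) (\sum_(i <- r) c i * w i).
Proof.
elim: r => [|i r IH] kc /=; first by rewrite big_nil.
exists (c i); first by apply: kc; rewrite mem_head.
by rewrite big_cons addrC addKr; apply: IH => j jr; apply: kc; rewrite in_cons jr orbT.
Qed.

Lemma lspan_coord ws y : lspan ws y ->
  exists c : 'I_(size ws) -> R, (forall i, k (c i)) /\ y = \sum_(i < size ws) c i * ws`_i.
Proof.
have [k0 _ _ _ _] := ks.
elim: ws y => [|w ws IH] y /=; first by move->; exists (fun=> 0); rewrite big_ord0.
case=> c0 kc0 /IH [c [kc Hc]].
exists (fun i : 'I_(size ws).+1 => if unlift ord0 i is Some j then c j else c0).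
split=> [i|]; first by case: (unlift ord0 i).
rewrite big_ord_recl /= unlift_none.
under eq_bigr => i _ do rewrite liftK.
by rewrite -Hc addrC subrK.
Qed.

Hypothesis divR : is_division_ring R.

(* Induction on the spanning list: either [V] already lies in the span of its
   tail, or some [v0 \in V] has a nonzero coefficient on the head and replaces it. *)
Lemma lsubspace_spanned ws (V : set R) : is_lsubspace V ->
  (forall y, V y -> lspan ws y) ->
  exists2 s, (forall v, v \in s -> V v) & forall y, V y -> lspan s y.
Proof.
have [_ _ kB kM kV] := ks.
elim: ws V => [|w ws IH] V [V0 VB VM] Vws; first by exists [::].
pose V' := V `&` lspan ws.
have V'sub : is_lsubspace V'.
  have [W0 WB WM] := lspan_lsubspace ws.
  by split=> [|a b [Va Wa] [Vb Wb]|c a kc [Va Wa]]; split; auto.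
have [s sV' V's] := IH V' V'sub (fun y => @proj2 _ _).
have [[v0 [Vv0 v0ws]]|] := pselect (exists v, V v /\ ~ lspan ws v); last first.
  move=> VW; exists s => [v /sV' []//|y Vy]; apply: V's; split=> //.
  by apply: contrapT => yW; apply: VW; exists y.
have [c0 kc0 Hv0] := Vws v0 Vv0.
have c0_unit : c0 \is a GRing.unit.
  by apply: divR; apply: contra_notN v0ws => /eqP c00; rewrite c00 mul0r subr0 in Hv0.
have kc0V : k c0^-1 by apply: kV => //; apply: contraTneq c0_unit => ->; rewrite unitr0.
exists (v0 :: s) => [v|y Vy /=].
  by rewrite in_cons => /orP[/eqP->|/sV'[]].
have [cy kcy Hy] := Vws y Vy.
exists (cy * c0^-1); first exact: kM.
apply: V's; split; first by apply: VB => //; apply: VM => //; exact: kM.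
have <- : (y - cy * w) - (cy * c0^-1) * (v0 - c0 * w) = y - cy * c0^-1 * v0.
  by rewrite mulrBr mulrA mulrVK // opprB addrA subrK.
have [_ WB WM] := lspan_lsubspace ws.
by apply: WB => //; apply: WM => //; exact: kM.
Qed.

Lemma left_findim_lspan ws (V : set R) : is_lsubspace V ->
  (forall y, V y -> lspan ws y) -> left_findim k V.
Proof.
move=> Vsub /(lsubspace_spanned Vsub) [s sV Vs].
by exists s; split=> // y /Vs /lspan_coord.
Qed.

End LeftSpan.

Definition inner_separated (R : unitRingType) (L : set R) n (s : 'I_n -> R -> R) :=
  forall i j c, c != 0 -> (forall a, L a -> c * s i a = s j a * c) -> i = j.

Lemma inner_separated_converse (R : unitRingType) (L : set R) n (s : 'I_n -> R -> R) :
  inner_separated L s -> inner_separated (L : set R^c) s.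
Proof. by move=> sep i j c c0 sc; apply/esym/(sep j i c c0) => a /sc. Qed.

Lemma subfield_converse (R : unitRingType) (k : set R) :
  is_subfield k -> is_subfield (k : set R^c).
Proof. by case=> k0 k1 kB kM kV; split=> // a b ka kb; exact: kM. Qed.

Lemma gen_subfield_subfield (R : unitRingType) (k : set R) x :
  is_subfield (gen_subfield k x).
Proof.
split=> [S|S|a b a_ b_ S|a b a_ b_ S|a a_ a0 S] Ss kS Sx;
  case: (Ss) => S0 S1 SB SM SV //.
- by apply: SB; [exact: a_|exact: b_].
- by apply: SM; [exact: a_|exact: b_].
- by apply: SV; [exact: a_|].
Qed.

Lemma sub_gen_subfield (R : unitRingType) (k : set R) x : k `<=` gen_subfield k x.
Proof. by move=> a ka S _ kS _; exact: kS. Qed.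

Lemma subfield_lsubspace (R : unitRingType) (k V : set R) :
  is_subfield V -> k `<=` V -> is_lsubspace k V.
Proof. by case=> V0 _ VB VM _ kV; split=> // c a /kV; exact: VM. Qed.

Section RingAut.
Variables (R : unitRingType) (f : R -> R).
Hypothesis f_aut : is_ring_aut f.

Lemma ring_aut0 : f 0 = 0.
Proof. by case: f_aut => fD _ _ _; apply: (addrI (f 0)); rewrite -fD !addr0. Qed.

Lemma ring_autB a b : f (a - b) = f a - f b.
Proof.
case: f_aut => fD _ _ _; apply: (addIr (f b)).
by rewrite -fD !subrK.
Qed.

Lemma ring_aut_sum (I : Type) (r : seq I) (F : I -> R) :
  f (\sum_(i <- r) F i) = \sum_(i <- r) f (F i).
Proof. by case: f_aut => fD _ _ _; apply: (big_morph f fD ring_aut0). Qed.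

Lemma ring_autV : is_division_ring R -> forall a, f a^-1 = (f a)^-1.
Proof.
case: f_aut => _ fM f1 _ divR a; have [->|a0] := eqVneq a 0.
  by rewrite invr0 ring_aut0 invr0.
have au : a \is a GRing.unit by exact: divR.
have fau : f a \is a GRing.unit.
  by apply/unitrP; exists (f a^-1); rewrite -!fM mulrV ?mulVr.
by apply: (mulrI fau); rewrite -fM !mulrV.
Qed.

End RingAut.

Lemma is_subfield_equalizer (R : unitRingType) (I : Type) (P : I -> Prop)
  (f g : I -> R -> R) : is_division_ring R ->
  (forall i, is_ring_aut (f i)) -> (forall i, is_ring_aut (g i)) ->
  is_subfield [set y | forall i, P i -> f i y = g i y].
Proof.
move=> divR fa ga; split=> [i _|i _|a b fa_ fb i Pi|a b fa_ fb i Pi|a fa_ _ i Pi].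
- by rewrite !ring_aut0.
- by case: (fa i) => _ _ ->; case: (ga i) => _ _ ->.
- by rewrite !ring_autB // fa_ // fb.
- by case: (fa i) => _ -> _ _; case: (ga i) => _ -> _ _; rewrite fa_ // fb.
- by rewrite !ring_autV // fa_.
Qed.

(* In an outer extension a nonzero [c] with [c a = a c] on [k] is central, so the
   twisted relation [c f = g c] collapses to [f = g]. *)
Lemma outer_twisted_eq (R : unitRingType) (k L : set R) (f g : R -> R) (c : R) :
  is_division_ring R -> outer_ext k -> k `<=` L ->
  (forall a, k a -> f a = a) -> (forall a, k a -> g a = a) -> c != 0 ->
  (forall a, L a -> c * f a = g a * c) -> forall a, L a -> f a = g a.
Proof.
move=> divR outer kL fk gk c0 cfg; have cu : c \is a GRing.unit by exact: divR.
have c_central : forall y, c * y * c^-1 = y.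
  by apply: outer => // a ka; have := cfg a (kL a ka); rewrite fk // gk // => ->; rewrite mulrK.
by move=> a La; rewrite -[LHS]c_central cfg // mulrK.
Qed.

Section Dedekind.
Variables (R : unitRingType) (L : set R) (n : nat) (s : 'I_n -> R -> R).
Hypotheses (divR : is_division_ring R) (L1 : L 1)
  (LM : forall a b, L a -> L b -> L (a * b))
  (sM : forall i a b, L a -> L b -> s i (a * b) = s i a * s i b)
  (s1 : forall i, s i 1 = 1)
  (s_sep : inner_separated L s).

Definition is_combination (v : 'I_n -> R) : Prop :=
  exists2 r : seq (R * R), (forall p, p \in r -> L p.2) &
    forall i, v i = \sum_(p <- r) p.1 * s i p.2.

Lemma is_combination1 : is_combination (fun=> 1).
Proof.
by exists [:: (1, 1)] => [p|i]; rewrite ?mem_seq1 ?big_seq1 /= ?s1 ?mulr1 // => /eqP->.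
Qed.

Lemma is_combinationB v w : is_combination v -> is_combination w ->
  is_combination (fun i => v i - w i).
Proof.
move=> [rv rvL vE] [rw rwL wE]; exists (rv ++ [seq (- p.1, p.2) | p <- rw]).
  by move=> p; rewrite mem_cat => /orP[/rvL|/mapP[q /rwL ? ->]].
move=> i; rewrite vE wE big_cat big_map -sumrN.
by congr (_ + _); apply: eq_bigr => p _; rewrite mulNr.
Qed.

Lemma is_combinationZ c v : is_combination v -> is_combination (fun i => c * v i).
Proof.
move=> [r rL vE]; exists [seq (c * p.1, p.2) | p <- r] => [p /mapP[q /rL ? ->]//|i].
by rewrite vE big_map mulr_sumr; apply: eq_bigr => p _; rewrite mulrA.
Qed.

Lemma is_combination_twist a v : L a -> is_combination v ->
  is_combination (fun i => v i * s i a).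
Proof.
move=> La [r rL vE]; exists [seq (p.1, p.2 * a) | p <- r].
  by move=> p /mapP[q qr ->]; apply: LM => //; exact: rL.
move=> i; rewrite vE big_map mulr_suml big_seq [RHS]big_seq.
by apply: eq_bigr => p pr; rewrite sM ?mulrA //; exact: rL.
Qed.

(* Twisting by [a] and subtracting [s m a] times [v] kills the [m]-th entry but
   not the [i]-th one; rescaling then clears entry [i] of [v]. *)
Lemma is_combination_shrink m i v : is_combination v -> v m = 1 -> i != m ->
  v i != 0 -> exists2 w, is_combination w &
    [/\ w m = 1, w i = 0 & forall j, v j = 0 -> w j = 0].
Proof.
move=> vc vm im vi.
have [a La sa] : exists2 a, L a & v i * s i a != s m a * v i.
  apply: contrapT => noa; move/eqP: im; apply.
  apply: (s_sep vi) => a La; apply: contrapT => ne; apply: noa.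
  by exists a => //; apply/eqP.
pose u j := v j * s j a - s m a * v j.
have uc : is_combination u.
  by apply: is_combinationB; [apply: is_combination_twist|apply: is_combinationZ].
have ui : u i \is a GRing.unit by apply: divR; rewrite subr_eq0.
exists (fun j => v j - v i / u i * u j).
  by apply: is_combinationB => //; apply: is_combinationZ.
split=> [||j vj]; first by rewrite /u vm mul1r mulr1 subrr mulr0 subr0.
  by rewrite mulrVK // subrr.
by rewrite /u vj mul0r mulr0 subrr mulr0 subrr.
Qed.

Lemma dedekind_delta m : exists2 r : seq (R * R), (forall p, p \in r -> L p.2) &
  forall i, \sum_(p <- r) p.1 * s i p.2 = (i == m)%:R.
Proof.
suff [r rL rv] : is_combination (fun i => (i == m)%:R) by exists r => // i; rewrite rv.
suff reduce N v : is_combination v -> v m = 1 -> (#|[pred i | v i != 0%R]| <= N)%N ->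
    is_combination (fun i => (i == m)%:R).
  apply: (reduce n _ is_combination1) => //.
  by apply: leq_trans (max_card _) _; rewrite card_ord.
elim: N v => [|N IH] v vc vm.
  by rewrite leqn0 => /eqP/card0_eq/(_ m); rewrite !inE vm oner_eq0.
move=> vN; have [[i im vi]|] := pselect (exists2 i, i != m & v i != 0); last first.
  move=> vdelta; case: vc => r rL rv; exists r => // i.
  have [->|im] := eqVneq i m; rewrite -rv ?vm //.
  by apply/esym/eqP; apply: contrapT => /negP vi; apply: vdelta; exists i.
have [w wc [wm wi wsupp]] := is_combination_shrink vc vm im vi.
apply: (IH w wc wm); rewrite -ltnS; apply: leq_trans vN; apply: proper_card.
apply/properP; split; last by exists i; rewrite !inE ?wi ?eqxx.
by apply/fintype.subsetP => j; rewrite !inE; apply: contra => /eqP/wsupp->.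
Qed.

End Dedekind.

Section Artin.
Variables (R : unitRingType) (k L : set R) (n : nat) (s : 'I_n -> R -> R) (i0 : 'I_n).
Hypotheses (divR : is_division_ring R) (L1 : L 1)
  (LM : forall a b, L a -> L b -> L (a * b))
  (sM : forall i a b, L a -> L b -> s i (a * b) = s i a * s i b)
  (s1 : forall i, s i 1 = 1) (s_sep : inner_separated L s)
  (s_i0 : forall y, L y -> s i0 y = y)
  (trace_k : forall z, L z -> k (\sum_i s i z)).

Lemma dedekind_delta_r m : exists2 r : seq (R * R), (forall p, p \in r -> L p.2) &
  forall i, \sum_(p <- r) s i p.2 * p.1 = (i == m)%:R.
Proof.
apply: (@dedekind_delta R^c L n s divR L1) => [a b La Lb|i a b La Lb||].
- exact: LM.
- exact: sM.
- exact: s1.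
- exact: inner_separated_converse.
Qed.

Lemma trace_dual_basis : exists2 r : seq (R * R), (forall p, p \in r -> L p.2) &
  forall y, L y -> y = \sum_(p <- r) (\sum_i s i (y * p.2)) * p.1.
Proof.
have [r rL rd] := dedekind_delta_r i0; exists r => // y Ly.
transitivity (\sum_i s i y * (i == i0)%:R).
  rewrite (bigD1 i0) //= eqxx mulr1 s_i0 // big1 ?addr0 // => i /negbTE->.
  by rewrite mulr0.
under eq_bigr do rewrite -rd mulr_sumr.
rewrite exchange_big /=; apply: eq_big_seq => p pr; rewrite mulr_suml.
by apply: eq_bigr => i _; rewrite sM ?mulrA //; exact: rL.
Qed.

Lemma lspan_trace : exists ws, forall y, L y -> lspan k ws y.
Proof.
have [r rL ry] := trace_dual_basis; exists (map fst r) => y Ly.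
by rewrite [y in lspan _ _ y]ry //; apply: lspan_sum => p pr; apply/trace_k/LM/rL.
Qed.

Lemma sigma_independent (d : 'I_n -> R) :
  (forall y, L y -> \sum_i s i y * d i = 0) -> forall m, d m = 0.
Proof.
move=> dL m; have [r rL rd] := dedekind_delta divR L1 LM sM s1 s_sep m.
transitivity (\sum_i (i == m)%:R * d i).
  by rewrite (bigD1 m) //= eqxx mul1r big1 ?addr0 // => i /negbTE->; rewrite mul0r.
under eq_bigr do rewrite -rd mulr_suml.
rewrite exchange_big /= big1_seq // => p /andP[_ pr].
under eq_bigr do rewrite -mulrA.
by rewrite -mulr_sumr dL ?mulr0 //; exact: rL.
Qed.

Lemma in_Gal_expansion f : in_Gal k f ->
  exists c : 'I_n -> R, forall y, L y -> f y = \sum_i s i y * c i.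
Proof.
move=> [f_aut fk]; have [_ fM _ _] := f_aut.
have [r rL ry] := trace_dual_basis.
exists (fun i => \sum_(p <- r) s i p.2 * f p.1) => y Ly.
rewrite {1}(ry y Ly) ring_aut_sum //.
transitivity (\sum_(p <- r) (\sum_i s i (y * p.2)) * f p.1).
  by apply: eq_big_seq => p pr; rewrite fM fk //; apply/trace_k/LM/rL.
under eq_bigr do rewrite mulr_suml.
rewrite exchange_big /=; apply: eq_bigr => i _; rewrite mulr_sumr.
by apply: eq_big_seq => p pr; rewrite sM ?mulrA //; exact: rL.
Qed.

Lemma in_Gal_restriction f : outer_ext k -> k `<=` L ->
  (forall i a, k a -> s i a = a) -> in_Gal k f ->
  exists i, forall y, L y -> f y = s i y.
Proof.
move=> outer kL sk fG; have [[_ fM f1 _] fk] := fG.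
have [c fc] := in_Gal_expansion fG.
have twist i a : L a -> s i a * c i = c i * f a.
  move=> La; apply/eqP; rewrite -subr_eq0; apply/eqP; move: i.
  apply: sigma_independent => y Ly; rewrite (eq_bigr _ (fun i _ => mulrBr _ _ _)) sumrB.
  have -> : \sum_i s i y * (s i a * c i) = f (y * a).
    by rewrite fc; [apply: eq_bigr => i _; rewrite sM ?mulrA|apply: LM].
  have -> : \sum_i s i y * (c i * f a) = f (y * a).
    by rewrite fM (fc y Ly) mulr_suml; apply: eq_bigr => i _; rewrite mulrA.
  exact: subrr.
have [i ci] : exists i, c i != 0.
  apply: contrapT => c0; have := fc 1 L1.
  rewrite f1 big1 => [/eqP|i _]; first by rewrite oner_eq0.
  by have [->|ci] := eqVneq (c i) 0; [rewrite mulr0|case: c0; exists i].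
exists i; apply: (outer_twisted_eq divR outer kL fk (sk i) ci) => a La.
by rewrite twist.
Qed.

End Artin.

Lemma compact_finite_cover (T : topologicalType) (I : choiceType) (f : I -> set T) :
  compact [set: T] -> (forall i, open (f i)) -> (forall t, exists i, f i t) ->
  exists s : seq I, forall t, exists2 i, i \in s & f i t.
Proof.
move=> cT fo fcov; apply: contrapT => nocover.
have finIc : finI setT (fun i => ~` f i).
  move=> D _; apply: contrapT => D0; apply: nocover; exists (D : seq I) => t.
  by apply: contrapT => nt; apply: D0; exists t => i /= iD fit; apply: nt; exists i.
have FF := finI_filter finIc.
have [|p [_ clp]] := cT _ FF; first exact: filterT.
have [i fip] := fcov p.
have [||q [nfq fq]] := clp (~` f i) (f i); last exact: nfq.
  by exists (~` f i) => //; exact: finI_from1.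
exact: open_nbhs_nbhs.
Qed.

Section ProfiniteAction.
Variables (G : topologicalType) (mul : G -> G -> G) (inv : G -> G) (e : G)
  (h : unitRingType) (act : G -> h -> h).
Hypotheses (mulV : forall a, mul (inv a) a = e /\ mul a (inv a) = e)
  (mul_cont : continuous (fun p : G * G => mul p.1 p.2))
  (G_compact : compact [set: G]) (divh : is_division_ring h)
  (act_aut : forall g, is_ring_aut (act g)) (act1 : forall x, act e x = x)
  (actM : forall g g' x, act (mul g g') x = act g (act g' x))
  (stab_open : forall x, open (stabilizer act x))
  (outer : outer_ext (fixed_set act)).

Local Notation k := (fixed_set act).

Lemma act_invK g : cancel (act g) (act (inv g)).
Proof. by move=> x; rewrite -actM (mulV g).1 act1. Qed.

Lemma act_invVK g : cancel (act (inv g)) (act g).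
Proof. by move=> x; rewrite -actM (mulV g).2 act1. Qed.

Lemma continuous_mull a : continuous (mul a).
Proof.
have -> : mul a = (fun p : G * G => mul p.1 p.2) \o (fun y => (a, y)) by [].
move=> x; apply: continuous_comp; last exact: mul_cont.
exact: (cvg_pair (cvg_cst a) cvg_id).
Qed.

Lemma open_agree x g : open [set g' | act g' x = act g x].
Proof.
have -> : [set g' | act g' x = act g x] = mul (inv g) @^-1` stabilizer act x.
  apply/seteqP; split=> g' /=; rewrite /stabilizer /= actM; first by move->; exact: act_invK.
  by move=> gx; rewrite -{2}gx act_invVK.
by apply: open_comp (stab_open x) => g' _; exact: continuous_mull.
Qed.

Definition agree_on (X : seq h) (g g' : G) : Prop := {in X, act g =1 act g'}.

Lemma open_agree_on X g : open [set g' | agree_on X g' g].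
Proof.
elim: X => [|x X IH].
  by rewrite (_ : [set g' | agree_on [::] g' g] = setT); [exact: openT|apply/seteqP].
have -> : [set g' | agree_on (x :: X) g' g] =
    [set g' | act g' x = act g x] `&` [set g' | agree_on X g' g].
  apply/seteqP; split=> g' /= => [agg|[gx agg] y].
    by split=> [|y yX]; apply: agg; rewrite in_cons ?eqxx ?yX ?orbT.
  by rewrite in_cons => /orP[/eqP->//|]; exact: agg.
by apply: openI => //; exact: open_agree.
Qed.

Lemma finite_restrictions X :
  exists gs : seq G, forall g, exists2 g', g' \in gs & agree_on X g g'.
Proof.
apply: (compact_finite_cover (f := fun g => [set g' | agree_on X g' g])) => //.
  exact: open_agree_on.
by move=> g; exists g.
Qed.

Lemma restriction_reps X : exists n (T : 'I_n -> G),
  (forall g, exists i, agree_on X g (T i)) /\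
  (forall i j, agree_on X (T i) (T j) -> i = j).
Proof.
have [gs gsP] := finite_restrictions X.
pose B := undup [seq map (act g) X | g <- gs].
have /choice [T TB] : forall i : 'I_(size B), exists g, map (act g) X = nth [::] B i.
  move=> i; have : nth [::] B i \in [seq map (act g) X | g <- gs].
    by rewrite -mem_undup mem_nth.
  by case/mapP => g _ ->; exists g.
exists (size B), T; split=> [g|i j /eq_in_map].
  have [g' g'gs /eq_in_map agg'] := gsP g.
  have gB : map (act g) X \in B by rewrite mem_undup agg'; apply: map_f.
  exists (Ordinal (etrans (index_mem _ _) gB)); apply/eq_in_map.
  by rewrite TB nth_index.
rewrite !TB => /eqP; rewrite nth_uniq ?undup_uniq // => /eqP; exact: val_inj.
Qed.

Definition determined_by (X : seq h) : set h :=
  [set y | forall g g', agree_on X g g' -> act g y = act g' y].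

Lemma determined_by_subfield X : is_subfield (determined_by X).
Proof.
have := is_subfield_equalizer (fun gg : G * G => agree_on X gg.1 gg.2)
  (f := fun gg => act gg.1) (g := fun gg => act gg.2) divh (fun=> act_aut _) (fun=> act_aut _).
rewrite (_ : [set y | _] = determined_by X) //.
by apply/seteqP; split=> y yX => [g g'|[g g']]; [exact: (yX (g, g'))|exact: yX].
Qed.

Lemma fixed_subfield : is_subfield k.
Proof.
have := is_subfield_equalizer setT (g := fun=> id) divh act_aut.
rewrite (_ : [set y | _] = k); first by apply; split=> //; exists id.
by apply/seteqP; split=> y yk g => [|_]; exact: yk.
Qed.

Lemma fixed_sub_determined X : k `<=` determined_by X.
Proof. by move=> y ky g g' _; rewrite !ky. Qed.

Lemma determined_by_mem X x : x \in X -> determined_by X x.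
Proof. by move=> xX g g'; exact. Qed.

Section Representatives.
Variables (X : seq h) (n : nat) (T : 'I_n -> G).
Hypotheses (T_cover : forall g, exists i, agree_on X g (T i))
  (T_inj : forall i j, agree_on X (T i) (T j) -> i = j).

Local Notation L := (determined_by X).

Lemma reps_separated : inner_separated L (fun i => act (T i)).
Proof.
move=> i j c c0 cij; apply: T_inj => x xX.
apply: (outer_twisted_eq divh outer (@fixed_sub_determined X) _ _ c0 cij).
- by move=> a ka; exact: ka.
- by move=> a ka; exact: ka.
- exact: determined_by_mem.
Qed.

Lemma reps_id : exists i0, forall y, L y -> act (T i0) y = y.
Proof. by have [i0 ei0] := T_cover e; exists i0 => y Ly; rewrite -(Ly _ _ ei0) act1. Qed.

(* [g] permutes the restrictions [act (T i)] to [L]. *)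
Lemma reps_trace z : L z -> k (\sum_i act (T i) z).
Proof.
move=> Lz g; rewrite ring_aut_sum //.
have /choice [p pP] : forall i, exists j, agree_on X (mul g (T i)) (T j).
  by move=> i; exact: T_cover.
have p_inj : injective p.
  move=> i j pij; apply: T_inj => x xX; apply: (can_inj (act_invK g)).
  by rewrite -!actM (pP i x xX) (pP j x xX) pij.
rewrite [RHS](reindex_inj p_inj); apply: eq_bigr => i _.
by rewrite -actM; exact: Lz (pP i).
Qed.

Lemma reps_artin :
  [/\ exists ws, forall y, L y -> lspan k ws y,
      exists ws, forall y, L y -> lspan (k : set h^c) ws y &
      forall f, in_Gal k f -> exists i, forall y, L y -> f y = act (T i) y].
Proof.
have [_ L1 _ LM _] := determined_by_subfield X.
have sM i a b : L a -> L b -> act (T i) (a * b) = act (T i) a * act (T i) b.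
  by case: (act_aut (T i)) => _ -> _ _.
have s1 i : act (T i) 1 = 1 by case: (act_aut (T i)).
have [i0 Ti0] := reps_id.
split.
- exact: (lspan_trace divh L1 LM sM s1 reps_separated Ti0 reps_trace).
- apply: (@lspan_trace h^c _ L n (fun i => act (T i)) i0 divh L1) => //.
  + by move=> a b La Lb; exact: LM Lb La.
  + by move=> i a b La Lb; exact: sM Lb La.
  + exact: inner_separated_converse reps_separated.
  + exact: reps_trace.
- move=> f; apply: (in_Gal_restriction divh L1 LM sM s1 reps_separated Ti0 reps_trace outer).
    exact: fixed_sub_determined.
  by move=> i a ka; exact: ka.
Qed.

End Representatives.

Lemma determined_by_artin X :
  [/\ exists ws, forall y, determined_by X y -> lspan k ws y,
      exists ws, forall y, determined_by X y -> lspan (k : set h^c) ws y &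
      forall f, in_Gal k f -> exists g, forall y, determined_by X y -> f y = act g y].
Proof.
have [n [T [T_cover T_inj]]] := restriction_reps X.
have [lsp rsp Gal] := reps_artin T_cover T_inj; split=> // f /Gal[i fi].
by exists (T i).
Qed.

Lemma fixed_algebraic : algebraic_ext k.
Proof.
move=> x; have ks := fixed_subfield; have kxs := gen_subfield_subfield k x.
have kkx := @sub_gen_subfield _ k x.
have [[ws Lws] [ws' Lws'] _] := determined_by_artin [:: x].
have kx_det y : gen_subfield k x y -> determined_by [:: x] y.
  apply; [exact: determined_by_subfield|exact: fixed_sub_determined|].
  by apply: determined_by_mem; rewrite mem_head.
split.
- apply: (left_findim_lspan ks divh (subfield_lsubspace kxs kkx)).
  by move=> y /kx_det; exact: Lws.
- apply: (left_findim_lspan (subfield_converse ks) divh).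
    exact: subfield_lsubspace (subfield_converse kxs) kkx.
  by move=> y /kx_det; exact: Lws'.
Qed.

Lemma fixed_galois : galois_ext k.
Proof.
apply/seteqP; split=> y /= yfix; last by move=> f [_]; exact.
by move=> g; apply: yfix; split=> // a; exact.
Qed.

(* If [f] differed from every [act g], the open sets [act g x <> f x] would cover
   [G]; a finite subcover is refuted by [f] agreeing with some [act g] on the
   finitely many points involved. *)
Lemma in_Gal_fixed f : in_Gal k f <-> exists g, f = act g.
Proof.
split=> [fG|[g ->]]; last by split=> // a; exact.
pose U x := [set g | act g x <> f x].
have U_open x : open (U x).
  have -> : U x = \bigcup_(g0 in [set g0 | act g0 x <> f x]) [set g | act g x = act g0 x].
    apply/seteqP; split=> g /=; first by move=> gx; exists g.
    by case=> g0 /= g0x; rewrite /U /= => ->.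
  by apply: bigcup_open => g0 _; exact: open_agree.
apply: contrapT => nf.
have [|X XU] := compact_finite_cover G_compact U_open.
  move=> g; apply: contrapT => gf; apply: nf; exists g; apply/funext => x.
  by apply: contrapT => fx; apply: gf; exists x => /=; apply/nesym.
have [_ _ Gal] := determined_by_artin X.
have [g fg] := Gal f fG; have [x xX gx] := XU g.
by apply: gx; rewrite fg //; exact: determined_by_mem.
Qed.

End ProfiniteAction.

Theorem lemma3 (G : topologicalType) (mul : G -> G -> G) (inv : G -> G) (e : G)
  (h : unitRingType) (act : G -> h -> h) :
  is_profinite_group mul inv e ->
  is_division_ring h ->
  faithful_aut_action mul e act ->
  (forall x : h, open (stabilizer act x)) ->
  outer_ext (fixed_set act) ->
  [/\ algebraic_ext (fixed_set act),
      galois_ext (fixed_set act) &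
      (forall s : h -> h, in_Gal (fixed_set act) s <-> exists g : G, s = act g)].
Proof.
move=> [[_ _ mulV] [mul_cont _ G_compact _ _]] divh [act_aut act1 actM _] stab_open outer.
split.
- exact: (fixed_algebraic mulV mul_cont G_compact divh act_aut act1 actM stab_open outer).
- exact: (fixed_galois act_aut).
- exact: (in_Gal_fixed mulV mul_cont G_compact divh act_aut act1 actM stab_open outer).
Qed.
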